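(* Let $X$ be a $d$-space such that ${\downarrow}(C\cap K)$ is closed for every nonempty closed set $C\neq X$ and every $K\in K(X)$. Then $X$ is $S^{\ast}$-well-filtered.
   Context: All spaces are $T_0$. The specialization order of $X$ is given by $x\le y$ iff $x\in cl(\{y\})$; ${\uparrow},{\downarrow}$ are taken with respect to it; a subset is saturated if it is an upper set in the specialization order. A $d$-space is a $T_0$-space that is a dcpo in its specialization order and whose open sets are all Scott open with respect to that order. $K(X)$ denotes the set of all nonempty compact saturated subsets of $X$; a family in $K(X)$ is filtered if any two members contain a common member. $X$ is $S^{\ast}$-well-filtered if for every filtered family $\{K_i\mid i\in I\}\subseteq K(X)$, every $G\in K(X)$ and every nonempty open $U$, $\bigcap_{i\in I}K_i\cap G\subseteq U$ implies $K_i\cap G\subseteq U$ for some $i$. *)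

From HB Require Import structures.
From mathcomp Require Import all_boot all_order.
From mathcomp Require Import all_classical all_reals all_analysis.
Set Implicit Arguments. Unset Strict Implicit. Unset Printing Implicit Defensive.
Local Open Scope classical_set_scope.

Section Defs.
Variable T : topologicalType.

Definition spec_le (x y : T) : Prop := closure [set y] x.

Definition upset (A : set T) : set T := [set y | exists2 x, A x & spec_le x y].
Definition downset (A : set T) : set T := [set x | exists2 y, A y & spec_le x y].

Definition saturated (A : set T) : Prop :=
  forall x y, A x -> spec_le x y -> A y.

Definition KX (K : set T) : Prop := K !=set0 /\ compact K /\ saturated K.

Definition directed (D : set T) : Prop :=
  D !=set0 /\ forall a b, D a -> D b -> exists2 c, D c & spec_le a c /\ spec_le b c.

Definition is_sup (D : set T) (s : T) : Prop :=
  (forall d, D d -> spec_le d s) /\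
  (forall u, (forall d, D d -> spec_le d u) -> spec_le s u).

Definition scott_open (U : set T) : Prop :=
  saturated U /\
  forall D s, directed D -> is_sup D s -> U s -> exists2 d, D d & U d.

Definition d_space : Prop :=
  kolmogorov_space T /\
  (forall D, directed D -> exists s, is_sup D s) /\
  (forall U, open U -> scott_open U).

Definition filtered_KX (F : set (set T)) : Prop :=
  F !=set0 /\ (forall K, F K -> KX K) /\
  forall A B, F A -> F B -> exists2 C, F C & C `<=` A `&` B.

Definition S_star_well_filtered : Prop :=
  forall (F : set (set T)) (G U : set T),
    filtered_KX F -> KX G -> open U -> U !=set0 ->
    \bigcap_(K in F) K `&` G `<=` U ->
    exists2 K, F K & K `&` G `<=` U.
End Defs.

(* Suppose no member K of the filtered family F satisfies K ∩ G ⊆ U. Then every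
   K meets B = ↓((X∖U) ∩ G), a proper closed set. Since an intersection of a chain
   of closed sets each meeting a compact K still meets K, Zorn's lemma yields a
   minimal closed A ⊆ B meeting every member of F. As F is filtered, ↓(A ∩ K) is
   again such a set, so A = ↓(A ∩ K) for every K in F. Closed sets of a d-space
   are closed under directed sups, so A has a maximal point m; m lies below a
   point of A ∩ K, hence in K by saturation, for every K. Finally m ≤ g for some
   g ∈ G∖U, and saturation puts g in ⋂F ∩ G ⊆ U: contradiction. *)

From mathcomp Require Import all_boot all_order.
From mathcomp Require Import all_classical all_reals all_analysis.
Set Implicit Arguments. Unset Strict Implicit. Unset Printing Implicit Defensive.
Local Open Scope classical_set_scope.

Section SpecializationOrder.
Variable T : topologicalType.

Lemma spec_le_refl (x : T) : spec_le x x.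
Proof. exact: subset_closure. Qed.

Lemma closed_spec_le (C : set T) (x y : T) :
  closed C -> C y -> spec_le x y -> C x.
Proof. by move=> cC Cy hxy; apply: cC; apply: closureS hxy => z ->. Qed.

Lemma spec_le_trans (x y z : T) : spec_le x y -> spec_le y z -> spec_le x z.
Proof. by move=> hxy hyz; exact: closed_spec_le (@closed_closure T [set z]) hyz hxy. Qed.

Lemma closed_downset_subset (A K : set T) : closed A -> downset (A `&` K) `<=` A.
Proof. by move=> cA x [y [Ay _] hxy]; exact: closed_spec_le cA Ay hxy. Qed.

End SpecializationOrder.

Section MinimalClosedSets.
Variable T : topologicalType.

Lemma compact_chain_meet (K : set T) (Fc : set (set T)) :
  compact K -> Fc !=set0 -> (forall C, Fc C -> closed C) ->
  total_on Fc subset -> (forall C, Fc C -> (C `&` K) !=set0) ->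
  (\bigcap_(C in Fc) C `&` K) !=set0.
Proof.
move=> cK [C0 FcC0] cFc tot meetK.
have FF : Filter (filter_from Fc (fun C => C `&` K)).
  apply: filter_from_filter; first by exists C0.
  move=> C1 C2 FcC1 FcC2; have [C12|C21] := tot _ _ FcC1 FcC2.
  - by exists C1 => // x [C1x Kx]; split; split=> //; exact: C12.
  - by exists C2 => // x [C2x Kx]; split; split=> //; exact: C21.
have FK : filter_from Fc (fun C => C `&` K) K by exists C0 => // x [].
have [p [Kp]] := cK _ (filter_from_proper FF meetK) FK.
rewrite clusterE => clp; exists p; split=> // C FcC.
apply: (cFc _ FcC); apply: (@closureS _ (C `&` K)); first by move=> x [].
by apply: clp; exists C.
Qed.

Definition meets_all (F : set (set T)) (A : set T) : Prop :=
  forall K, F K -> (A `&` K) !=set0.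

Lemma minimal_closed_meets_all (F : set (set T)) (B : set T) :
  (forall K, F K -> compact K) -> closed B -> meets_all F B ->
  exists A, [/\ closed A, A `<=` B, meets_all F A &
    forall A', closed A' -> A' `<=` A -> meets_all F A' -> A `<=` A'].
Proof.
move=> cF cB mB.
pose S := {A : set T | closed A /\ A `<=` B /\ meets_all F A}.
pose R := fun A A' : S => `[< sval A' `<=` sval A >].
pose SB : S := exist _ B (conj cB (conj (@subset_refl _ B) mB)).
have [[A [cA [AB mA]]] maxA] : exists A, premaximal R A.
  apply: (ZL_preorder SB).
  - by move=> A; apply/asboolP.
  - by move=> A1 A2 A3 /asboolP h12 /asboolP h23; apply/asboolP => x /h23/h12.
  move=> Sc tot.
  have [[A0 ScA0]|noSc] := pselect (exists A, Sc A); last first.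
    by exists SB => A ScA; exfalso; exact: noSc (ex_intro _ A ScA).
  pose Fc := [set sval A | A in Sc]; pose I := \bigcap_(C in Fc) C.
  have cI : closed I by apply: closed_bigI => _ [A _ <-]; case: (svalP A).
  have IB : I `<=` B.
    move=> x /(_ (sval A0) (ex_intro2 _ _ A0 ScA0 erefl)).
    by case: (svalP A0) => _ [+ _]; apply.
  have mI : meets_all F I.
    move=> K FK; apply: compact_chain_meet (cF _ FK) _ _ _ _.
    - by exists (sval A0), A0.
    - by move=> _ [A _ <-]; case: (svalP A).
    - move=> _ _ [A1 ScA1 <-] [A2 ScA2 <-].
      by have [/asboolP h|/asboolP h] := tot _ _ ScA1 ScA2; [right|left].
    - by move=> _ [A ScA <-]; case: (svalP A) => _ [_]; apply.
  exists (exist _ I (conj cI (conj IB mI))) => A ScA; apply/asboolP => x Ix.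
  exact: Ix (ex_intro2 _ _ A ScA erefl).
exists A; split=> // A' cA' A'A mA'.
have A'S : closed A' /\ A' `<=` B /\ meets_all F A'.
  by split=> //; split=> //; exact: subset_trans A'A AB.
by have /asboolP := maxA (exist _ A' A'S) (asboolT A'A).
Qed.

End MinimalClosedSets.

Section DSpace.
Variable T : topologicalType.
Hypothesis dcpo : forall D : set T, directed D -> exists s, is_sup D s.
Hypothesis open_scott : forall U : set T, open U -> scott_open U.

Lemma closed_is_sup (A D : set T) (s : T) :
  closed A -> directed D -> D `<=` A -> is_sup D s -> A s.
Proof.
move=> cA dD DA supDs; apply: contrapT => nAs.
have [_ /(_ D s dD supDs nAs) [d Dd]] := open_scott (closed_openC cA).
by apply; exact: DA.
Qed.

Lemma closed_has_maximal (A : set T) : closed A -> A !=set0 ->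
  exists2 m, A m & forall y, A y -> spec_le m y -> spec_le y m.
Proof.
move=> cA [a0 Aa0].
pose R := fun a b : {x : T | A x} => `[< spec_le (sval a) (sval b) >].
have [[m Am] maxm] : exists m, premaximal R m.
  apply: (ZL_preorder (exist _ a0 Aa0)).
  - by move=> a; apply/asboolP; exact: spec_le_refl.
  - move=> a b c /asboolP hab /asboolP hbc.
    by apply/asboolP; exact: spec_le_trans hab hbc.
  move=> S tot.
  have [[a Sa]|noS] := pselect (exists a, S a); last first.
    by exists (exist _ a0 Aa0) => a Sa; exfalso; exact: noS (ex_intro _ a Sa).
  pose D := [set sval b | b in S].
  have dD : directed D.
    split; first by exists (sval a), a.
    move=> _ _ [b Sb <-] [c Sc <-].
    have [/asboolP h|/asboolP h] := tot _ _ Sb Sc.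
    - by exists (sval c); [exists c | split=> //; exact: spec_le_refl].
    - by exists (sval b); [exists b | split=> //; exact: spec_le_refl].
  have [s supDs] := dcpo dD.
  have As : A s by apply: closed_is_sup cA dD _ supDs => _ [b _ <-]; exact: svalP.
  by exists (exist _ s As) => b Sb; apply/asboolP; apply: supDs.1; exists b.
exists m => // y Ay hmy.
by have /asboolP := maxm (exist _ y Ay) (asboolT hmy).
Qed.

Hypothesis closed_downset_trace : forall C K : set T,
  closed C -> C !=set0 -> C <> setT -> KX K -> closed (downset (C `&` K)).

Lemma minimal_closed_sub_downset (F : set (set T)) (A : set T) :
  filtered_KX F -> closed A -> A !=set0 -> A <> setT -> meets_all F A ->
  (forall A', closed A' -> A' `<=` A -> meets_all F A' -> A `<=` A') ->
  forall K, F K -> A `<=` downset (A `&` K).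
Proof.
move=> [_ [FKX Ffilt]] cA A0 AT mA minA K FK; apply: minA.
- exact: closed_downset_trace cA A0 AT (FKX _ FK).
- exact: closed_downset_subset.
move=> K' FK'; have [K'' FK'' K''sub] := Ffilt _ _ FK FK'.
have [x [Ax K''x]] := mA _ FK''; have [Kx K'x] := K''sub _ K''x.
by exists x; split=> //; exists x => //; exact: spec_le_refl.
Qed.

Lemma closed_meets_bigcap (F : set (set T)) (B : set T) :
  filtered_KX F -> closed B -> B <> setT -> meets_all F B ->
  (B `&` \bigcap_(K in F) K) !=set0.
Proof.
move=> Ffilt cB BT mB; have [[K0 FK0] [FKX _]] := Ffilt.
have [A [cA AB mA minA]] :=
  minimal_closed_meets_all (fun K FK => (FKX K FK).2.1) cB mB.
have A0 : A !=set0 by have [x [Ax _]] := mA _ FK0; exists x.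
have AT : A <> setT.
  by move=> AT; apply: BT; apply/seteqP; split=> // x _; apply: AB; rewrite AT.
have [m Am maxm] := closed_has_maximal cA A0.
exists m; split; first exact: AB.
move=> K FK.
have [y [Ay Ky] hmy] := minimal_closed_sub_downset Ffilt cA A0 AT mA minA FK Am.
by have [_ [_ satK]] := FKX _ FK; apply: satK Ky (maxm _ Ay hmy).
Qed.

End DSpace.

Theorem mainTheorem11 (T : topologicalType) :
  d_space T ->
  (forall (C K : set T), closed C -> C !=set0 -> C <> setT -> KX K ->
     closed (downset (C `&` K))) ->
  S_star_well_filtered T.
Proof.
move=> [_ [dcpo open_scott]] downset_closed F G U Ffilt KG oU [u Uu] FGU.
apply: contrapT => noK.
have meetC : meets_all F (~` U `&` G).
  move=> K FK; apply: contrapT => nmeet; apply: noK; exists K => // x [Kx Gx].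
  by apply: contrapT => nUx; apply: nmeet; exists x.
have [K0 FK0] := Ffilt.1.
have CT : ~` U <> setT by move=> UT; have : (~` U) u by rewrite UT.
pose B := downset (~` U `&` G).
have cB : closed B.
  apply: downset_closed CT KG; first exact: open_closedC.
  by have [x [[nUx _] _]] := meetC _ FK0; exists x.
have BT : B <> setT.
  by move=> BT; apply: CT; apply/seteqP; split=> // x _;
    apply: (closed_downset_subset (K := G) (open_closedC oU)); rewrite -/B BT.
have mB : meets_all F B.
  move=> K /meetC [x [CGx Kx]].
  by exists x; split=> //; exists x => //; exact: spec_le_refl.
have [m [[g [nUg Gg] hmg] Fm]] :=
  closed_meets_bigcap dcpo open_scott downset_closed Ffilt cB BT mB.
apply: nUg; apply: FGU; split=> // K FK.
by have [_ [_ satK]] := Ffilt.2.1 K FK; exact: satK (Fm K FK) hmg.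
Qed.
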